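(* Let $r$ be either an integer with $r\ge 2$ or $r=\infty$. Then, with probability one, $$\lim_{n\to\infty}\|\hat p_n-p_0\|_r=0 .$$
   Context: For a real sequence $p=(p(k))_{k\in\mathbb N}$ (with $\mathbb N=\{0,1,2,\dots\}$) write $\|p\|_r=(\sum_{k\ge0}|p(k)|^r)^{1/r}$ for integers $r\ge1$ and $\|p\|_\infty=\sup_k|p(k)|$. For $k\ge1$ let $\Delta p(k)=p(k+1)-2p(k)+p(k-1)$. A sequence $p$ is convex if $\Delta p(k)\ge0$ for all integers $k\ge1$; let $\mathcal C$ be the set of convex sequences with $\|p\|_2<\infty$. Let $p_0$ be a convex probability mass function (pmf) on $\mathbb N$ whose support is either $\mathbb N$ or $\{0,1,\dots,S\}$ for some integer $S\ge1$. Let $X_1,X_2,\dots$ be i.i.d. with pmf $p_0$, let $p_n(j)=\frac1n\sum_{i=1}^n\mathbb 1\{X_i=j\}$ be the empirical pmf, and let the least squares estimator (LSE) $\hat p_n$ be the unique minimizer over $\mathcal C$ of $\Phi_n(p)=\frac12\sum_{j\in\mathbb N}(p_n(j)-p(j))^2$. *)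

From Stdlib Require Import Reals Lra Lia List.
Open Scope R_scope.

Definition Delta (p : nat -> R) (k : nat) : R :=
  p (S k) - 2 * p k + p (Nat.pred k).

Definition convex_seq (p : nat -> R) : Prop :=
  forall k : nat, (1 <= k)%nat -> 0 <= Delta p k.

Definition square_summable (p : nat -> R) : Prop :=
  exists l : R, infinite_sum (fun k => (p k) ^ 2) l.

Definition in_C (p : nat -> R) : Prop := convex_seq p /\ square_summable p.

Definition is_pmf (p : nat -> R) : Prop :=
  (forall k, 0 <= p k) /\ infinite_sum p 1.

Definition support_ok (p : nat -> R) : Prop :=
  (forall k, 0 < p k) \/
  (exists S : nat, (1 <= S)%nat /\ forall k, (0 < p k <-> (k <= S)%nat)).

Fixpoint count_eq (x : nat -> nat) (j : nat) (n : nat) : nat :=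
  match n with
  | O => O
  | S m => (if Nat.eqb (x m) j then 1 else 0) + count_eq x j m
  end.

(* Empirical pmf of X_1,...,X_n, where the sample is x 0, ..., x (n-1). *)
Definition empirical (x : nat -> nat) (n : nat) (j : nat) : R :=
  INR (count_eq x j n) / INR n.

Definition Phi_val (pn p : nat -> R) (v : R) : Prop :=
  infinite_sum (fun j => / 2 * (pn j - p j) ^ 2) v.

Definition is_LSE (pn q : nat -> R) : Prop :=
  in_C q /\
  forall p : nat -> R, in_C p ->
    forall a b : R, Phi_val pn q a -> Phi_val pn p b -> a <= b.

(* r : None = infinity, Some k = integer k.  lr_norm r p v  <->  ||p||_r = v *)
Definition lr_norm (r : option nat) (p : nat -> R) (v : R) : Prop :=
  match r with
  | Some k => 0 <= v /\ infinite_sum (fun j => (Rabs (p j)) ^ k) (v ^ k)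
  | None => is_lub (fun y => exists j, y = Rabs (p j)) v
  end.

(* Product measure of i.i.d. p0 on N^N: weight of the cylinder with prefix l *)
Fixpoint cyl_weight (p0 : nat -> R) (l : list nat) : R :=
  match l with
  | nil => 1
  | a :: t => p0 a * cyl_weight p0 t
  end.

Definition has_prefix (x : nat -> nat) (l : list nat) : Prop :=
  forall i, (i < length l)%nat -> x i = nth i l O.

(* E is a null set (outer measure zero) for the i.i.d. product measure p0^N:
   for every eps>0 it is covered by countably many cylinders of total mass <= eps *)
Definition null_set (p0 : nat -> R) (E : (nat -> nat) -> Prop) : Prop :=
  forall eps : R, 0 < eps ->
    exists cover : nat -> list nat,
      (forall x, E x -> exists m, has_prefix x (cover m)) /\
      (forall M, sum_f_R0 (fun m => cyl_weight p0 (cover m)) M <= eps).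

From Stdlib Require Import Reals.
From Stdlib Require Import Lra Lia List Classical ClassicalEpsilon Cantor Wf_nat.
Import ListNotations.
Open Scope R_scope.

(* Since [p0] itself lies in [C], the least squares estimator is no farther from the empirical
   pmf [p_n] than [p0] is, so [||p_hat_n - p0||_2 <= 2 ||p_n - p0||_2]; and [||.||_r <= ||.||_2]
   for [r >= 2]. It therefore suffices that [||p_n - p0||_2 -> 0] almost surely. Both are
   subprobabilities and [p0] carries all but [eta] of its mass on a finite head, so this follows
   from almost sure convergence of each frequency [p_n(j)], i.e. the strong law of large numbers.
   The latter is obtained in martingale form: a deviation of [p_n(j)] from [p0(j)] makes one of
   the products [prod_i (1 +- lam (1{X_i = j} - p0(j)))] exponentially large, and by Ville's
   inequality the paths on which a nonnegative supermartingale ever reaches [1] are covered by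
   cylinders of total mass at most its initial value. *)

Lemma Un_cv_const c : Un_cv (fun _ => c) c.
Proof. intros e He; exists O; intros n _; unfold Rdist; rewrite Rminus_diag, Rabs_R0; lra. Qed.

Lemma infinite_sum_lin a b la lb c d :
  infinite_sum a la -> infinite_sum b lb ->
  infinite_sum (fun n => c * a n + d * b n) (c * la + d * lb).
Proof.
  intros Ha Hb.
  apply (Un_cv_ext (fun n => c * sum_f_R0 a n + d * sum_f_R0 b n)).
  - intros n; rewrite plus_sum, !scal_sum; f_equal; apply sum_eq; intros; ring.
  - apply CV_plus; apply CV_mult; auto; apply Un_cv_const.
Qed.

Lemma infinite_sum_scal a la c : infinite_sum a la -> infinite_sum (fun n => c * a n) (c * la).
Proof.
  intros Ha.
  apply (Un_cv_ext (fun n => c * sum_f_R0 a n)).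
  - intros n; rewrite scal_sum; apply sum_eq; intros; ring.
  - apply CV_mult; auto; apply Un_cv_const.
Qed.

Lemma infinite_sum_le a b la lb :
  (forall n, a n <= b n) -> infinite_sum a la -> infinite_sum b lb -> la <= lb.
Proof.
  intros H Ha Hb; apply (Rle_cv_lim (Un := sum_f_R0 a) (Vn := sum_f_R0 b)); auto.
  intros n; apply sum_growing; auto.
Qed.

Lemma infinite_sum_le_bound a l B :
  (forall n, sum_f_R0 a n <= B) -> infinite_sum a l -> l <= B.
Proof. intros H Ha; apply (Rle_cv_lim (Un := sum_f_R0 a) (Vn := fun _ => B)); auto; apply Un_cv_const. Qed.

Lemma infinite_sum_dominated a b :
  (forall n, 0 <= a n <= b n) -> (exists l, infinite_sum b l) -> exists l, infinite_sum a l.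
Proof.
  intros H [l Hl].
  destruct (Rseries_CV_comp a b H (exist _ l Hl)) as [l' Hl']; exists l'; exact Hl'.
Qed.

Lemma infinite_sum_nonneg a l : (forall k, 0 <= a k) -> infinite_sum a l -> 0 <= l.
Proof. intros H Ha; apply Rle_trans with (sum_f_R0 a 0); [simpl; auto | apply sum_incr; auto]. Qed.

Lemma sum_f_R0_le_index (f : nat -> R) M M' :
  (forall i, 0 <= f i) -> (M <= M')%nat -> sum_f_R0 f M <= sum_f_R0 f M'.
Proof. intros H Hm; induction Hm; [lra | rewrite tech5; specialize (H (S m)); lra]. Qed.

Lemma term_le_sum_f_R0 (f : nat -> R) j k :
  (forall i, 0 <= f i) -> (j <= k)%nat -> f j <= sum_f_R0 f k.
Proof.
  intros H Hj; apply Rle_trans with (sum_f_R0 f j).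
  - destruct j; simpl; [lra|]; pose proof (cond_pos_sum f j H); lra.
  - apply sum_f_R0_le_index; auto.
Qed.

Lemma term_le_infinite_sum a l j : (forall k, 0 <= a k) -> infinite_sum a l -> a j <= l.
Proof.
  intros H Ha; apply Rle_trans with (sum_f_R0 a j);
    [apply term_le_sum_f_R0; auto | apply sum_incr; auto].
Qed.

Lemma infinite_sum_finite_support a M :
  (forall k, (M < k)%nat -> a k = 0) -> infinite_sum a (sum_f_R0 a M).
Proof.
  intros H e He; exists M; intros n Hn.
  assert (sum_f_R0 a n = sum_f_R0 a M) as ->.
  { induction Hn; auto; rewrite tech5, IHHn, H by lia; ring. }
  unfold Rdist; rewrite Rminus_diag, Rabs_R0; lra.
Qed.

Lemma sum_f_R0_const a k : sum_f_R0 (fun _ => a) k = INR (S k) * a.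
Proof. induction k; [simpl; ring | rewrite tech5, IHk, (S_INR (S k)); ring]. Qed.

Lemma sum_f_R0_geometric_le c M : 0 <= c -> sum_f_R0 (fun m => c * (/2)^(S m)) M <= c.
Proof.
  intros Hc.
  assert (sum_f_R0 (fun m => c * (/2)^(S m)) M = c * (1 - (/2)^(S M))) as ->.
  { induction M; [simpl; field | rewrite tech5, IHM; simpl; field]. }
  assert (0 <= (/2)^(S M)) by (apply pow_le; lra); nra.
Qed.

Definition sum_list {A} (f : A -> R) (l : list A) : R := fold_right (fun x acc => f x + acc) 0 l.

Lemma sum_list_app {A} f (l1 l2 : list A) : sum_list f (l1 ++ l2) = sum_list f l1 + sum_list f l2.
Proof. induction l1; simpl; [lra | rewrite IHl1; lra]. Qed.

Lemma sum_list_filter {A} f (p : A -> bool) l :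
  sum_list f l = sum_list f (filter p l) + sum_list f (filter (fun x => negb (p x)) l).
Proof. induction l as [|a l IH]; simpl; [lra|]; destruct (p a); simpl; rewrite IH; lra. Qed.

Lemma sum_list_le {A} f g (l : list A) :
  (forall x, In x l -> f x <= g x) -> sum_list f l <= sum_list g l.
Proof.
  induction l as [|a l IH]; simpl; intros H; [lra|].
  pose proof (H a (or_introl eq_refl)); assert (sum_list f l <= sum_list g l) by auto; lra.
Qed.

Lemma sum_list_nonneg {A} f (l : list A) : (forall x, In x l -> 0 <= f x) -> 0 <= sum_list f l.
Proof.
  induction l as [|a l IH]; simpl; intros H; [lra|].
  pose proof (H a (or_introl eq_refl)); assert (0 <= sum_list f l) by auto; lra.
Qed.

Lemma sum_list_map {A B} (f : B -> R) (g : A -> B) l :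
  sum_list f (map g l) = sum_list (fun x => f (g x)) l.
Proof. induction l; simpl; [reflexivity | rewrite IHl; reflexivity]. Qed.

Lemma sum_list_scal {A} c f (l : list A) : sum_list (fun x => c * f x) l = c * sum_list f l.
Proof. induction l; simpl; [ring | rewrite IHl; ring]. Qed.

Lemma sum_list_plus {A} f g (l : list A) :
  sum_list (fun x => f x + g x) l = sum_list f l + sum_list g l.
Proof. induction l; simpl; [ring | rewrite IHl; ring]. Qed.

Lemma sum_list_ext_in {A} f g (l : list A) :
  (forall x, In x l -> f x = g x) -> sum_list f l = sum_list g l.
Proof. induction l; simpl; intros H; [reflexivity|]; rewrite H, IHl by auto; reflexivity. Qed.

Lemma sum_list_seq (f : nat -> R) n : sum_list f (seq 0 (S n)) = sum_f_R0 f n.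
Proof.
  induction n; [simpl; ring|].
  rewrite seq_S, sum_list_app, IHn, tech5; simpl; ring.
Qed.

Lemma sum_list_le_single {A} f (l : list A) a :
  NoDup l -> (forall x, In x l -> x = a) -> 0 <= f a -> sum_list f l <= f a.
Proof.
  intros Hn H Hf; destruct l as [|b [|c l]]; simpl.
  - lra.
  - rewrite (H b) by (left; auto); lra.
  - exfalso; inversion Hn; subst; apply H2; rewrite (H b), (H c) by (simpl; auto); left; auto.
Qed.

Lemma sum_list_group {A} (key : A -> nat) (f : A -> R) (H : list nat) (l : list A) :
  NoDup H -> (forall x, In x l -> In (key x) H) ->
  sum_list f l = sum_list (fun a => sum_list f (filter (fun x => Nat.eqb (key x) a) l)) H.
Proof.
  revert l; induction H as [|a H IH]; intros l Hn Hl.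
  - destruct l as [|x l]; [reflexivity|]; destruct (Hl x (or_introl eq_refl)).
  - inversion Hn as [|? ? Ha Hn']; subst; simpl.
    rewrite (sum_list_filter f (fun x => Nat.eqb (key x) a) l); f_equal.
    rewrite IH; auto.
    + apply sum_list_ext_in; intros b Hb; f_equal.
      induction l as [|x l IHl]; simpl; auto.
      destruct (Nat.eqb_spec (key x) a) as [Ea|Ea], (Nat.eqb_spec (key x) b) as [Eb|Eb]; simpl;
        try rewrite IHl by (intros; apply Hl; right; auto); subst; try congruence.
      * rewrite Nat.eqb_refl; reflexivity.
      * apply Nat.eqb_neq in Eb; rewrite Eb; reflexivity.
    + intros x Hx; apply filter_In in Hx as [Hx Hk].
      apply Bool.negb_true_iff, Nat.eqb_neq in Hk.
      destruct (Hl x Hx); [congruence | auto].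
Qed.

(* Conditional expectations under the i.i.d. law [p0] are controlled through their finite
   subsums over distinct letters, which avoids infinite sums over the alphabet. *)
Definition supermartingale (p0 : nat -> R) (K : list nat -> R) : Prop :=
  (forall l, 0 <= K l) /\
  forall l F, NoDup F -> sum_list (fun a => p0 a * K (l ++ [a])) F <= K l.

Definition is_prefix (l1 l2 : list nat) : Prop := exists s, l2 = l1 ++ s.

Definition antichain (A : list (list nat)) : Prop :=
  forall l1 l2, In l1 A -> In l2 A -> l1 <> l2 -> ~ is_prefix l1 l2.

Lemma cyl_weight_nonneg p0 l : (forall k, 0 <= p0 k) -> 0 <= cyl_weight p0 l.
Proof. intros H; induction l; simpl; [lra | apply Rmult_le_pos; auto]. Qed.

Lemma NoDup_map_tl a (A : list (list nat)) :
  NoDup A -> (forall l, In l A -> l = a :: tl l) -> NoDup (map (@tl nat) A).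
Proof.
  intros Hn H; apply NoDup_map_NoDup_ForallPairs; auto.
  intros x y Hx Hy E; rewrite (H x), (H y), E by auto; reflexivity.
Qed.

Lemma antichain_map_tl a A :
  antichain A -> (forall l, In l A -> l = a :: tl l) -> antichain (map (@tl nat) A).
Proof.
  intros H Hh t1 t2 H1 H2 Hne [s Hs].
  apply in_map_iff in H1 as [l1 [<- H1]]; apply in_map_iff in H2 as [l2 [<- H2]].
  apply (H l1 l2 H1 H2); [intros E; apply Hne; subst; auto|].
  exists s; rewrite (Hh l1), (Hh l2), Hs by auto; reflexivity.
Qed.

Lemma antichain_filter f A : antichain A -> antichain (filter f A).
Proof. intros H l1 l2 H1 H2; apply filter_In in H1, H2; apply H; tauto. Qed.

Lemma in_filter_hd a (A : list (list nat)) l :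
  In l (filter (fun x => Nat.eqb (hd O x) a) A) -> l <> [] -> l = a :: tl l.
Proof.
  intros Hl Hne; apply filter_In in Hl as [_ Hl]; apply Nat.eqb_eq in Hl.
  destruct l; [congruence | simpl in *; subst; reflexivity].
Qed.

(* Ville's maximal inequality, in antichain form. *)
Lemma supermartingale_antichain_le p0 K n : (forall k, 0 <= p0 k) -> supermartingale p0 K ->
  forall r A, NoDup A -> antichain A -> (forall l, In l A -> (length l <= n)%nat) ->
  sum_list (fun l => cyl_weight p0 l * K (r ++ l)) A <= K r.
Proof.
  intros Hp [HK0 HK]; induction n as [|n IH]; intros r A Hn Ha Hl.
  all: assert (Hr : K r = cyl_weight p0 [] * K (r ++ [])) by (simpl; rewrite app_nil_r; ring).
  all: assert (H0r : 0 <= cyl_weight p0 [] * K (r ++ [])) by (simpl; rewrite app_nil_r; specialize (HK0 r); lra).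
  - rewrite Hr; apply (sum_list_le_single (fun l => cyl_weight p0 l * K (r ++ l))); auto.
    intros x Hx; specialize (Hl x Hx); destruct x; simpl in Hl; auto; lia.
  - destruct (classic (In [] A)) as [Hin|Hnin].
    { rewrite Hr; apply (sum_list_le_single (fun l => cyl_weight p0 l * K (r ++ l))); auto.
      intros x Hx; destruct (list_eq_dec Nat.eq_dec [] x) as [E|E]; auto.
      exfalso; apply (Ha [] x Hin Hx E); exists x; reflexivity. }
    set (heads := nodup Nat.eq_dec (map (hd O) A)).
    rewrite (sum_list_group (hd O) _ heads A (NoDup_nodup _ _))
      by (intros x Hx; apply nodup_In, in_map; auto).
    eapply Rle_trans; [| apply (HK r heads (NoDup_nodup _ _))].
    apply sum_list_le; intros a _.
    set (A_a := filter (fun x => Nat.eqb (hd O x) a) A).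
    assert (Hcons : forall l, In l A_a -> l = a :: tl l).
    { intros l Hla; apply (in_filter_hd a A l Hla); intros ->.
      apply Hnin; apply filter_In in Hla; tauto. }
    assert (sum_list (fun l => cyl_weight p0 l * K (r ++ l)) A_a =
            p0 a * sum_list (fun t => cyl_weight p0 t * K ((r ++ [a]) ++ t)) (map (@tl nat) A_a)) as ->.
    { rewrite sum_list_map, <- sum_list_scal; apply sum_list_ext_in; intros l Hla.
      rewrite (Hcons l Hla) at 1 2; simpl; rewrite <- app_assoc; simpl; ring. }
    apply Rmult_le_compat_l; [auto|]; apply IH.
    + apply (NoDup_map_tl a); [apply NoDup_filter|]; auto.
    + apply (antichain_map_tl a); [apply antichain_filter|]; auto.
    + intros t Ht; apply in_map_iff in Ht as [l [<- Hla]].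
      assert (HlA : In l A) by (apply filter_In in Hla; tauto).
      specialize (Hl l HlA); rewrite (Hcons l Hla) in Hl; simpl in Hl; lia.
Qed.

Lemma firstn_length_app {A} (l s : list A) : firstn (length l) (l ++ s) = l.
Proof. rewrite firstn_app, firstn_all, Nat.sub_diag, firstn_O, app_nil_r; reflexivity. Qed.

Definition first_crossing (K : list nat -> R) (l : list nat) : Prop :=
  1 <= K l /\ forall n, (n < length l)%nat -> K (firstn n l) < 1.

Lemma first_crossing_antichain K A : (forall l, In l A -> first_crossing K l) -> antichain A.
Proof.
  intros H l1 l2 H1 H2 Hne [[|b s] Hs]; [apply Hne; rewrite Hs, app_nil_r; reflexivity|].
  destruct (H l2 H2) as [_ Hf]; destruct (H l1 H1) as [Hk _].
  specialize (Hf (length l1)); rewrite Hs, length_app in Hf; simpl in Hf.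
  rewrite firstn_length_app in Hf.
  specialize (Hf ltac:(lia)); lra.
Qed.

Lemma first_crossings_weight_le p0 K A : (forall k, 0 <= p0 k) -> supermartingale p0 K ->
  NoDup A -> (forall l, In l A -> first_crossing K l) -> sum_list (cyl_weight p0) A <= K [].
Proof.
  intros Hp HK Hn H.
  destruct (list_max_le (map (@length nat) A) (list_max (map (@length nat) A))) as [Hmax _].
  specialize (Hmax (le_n _)); rewrite Forall_forall in Hmax.
  eapply Rle_trans; [| apply (supermartingale_antichain_le p0 K (list_max (map (@length nat) A))
    Hp HK [] A Hn (first_crossing_antichain K A H))]; [| intros l Hl; apply Hmax, in_map; auto].
  apply sum_list_le; intros l Hl; simpl; destruct (H l Hl) as [H1 _].
  pose proof (cyl_weight_nonneg p0 l Hp); nra.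
Qed.

Lemma first_crossings_family_weight_le p0 (Kf : nat -> list nat -> R) B P :
  (forall k, 0 <= p0 k) -> (forall k, supermartingale p0 (Kf k)) -> NoDup P ->
  (forall e, In e P -> exists k l, e = k :: l /\ (k <= B)%nat /\ first_crossing (Kf k) l) ->
  sum_list (fun e => cyl_weight p0 (tl e)) P <= sum_f_R0 (fun k => Kf k []) B.
Proof.
  intros Hp HK Hn HP.
  rewrite (sum_list_group (hd O) _ (seq 0 (S B)) P (seq_NoDup _ _)), <- sum_list_seq.
  2: { intros e He; apply in_seq; destruct (HP e He) as [k [l [-> [Hk _]]]]; simpl; lia. }
  apply sum_list_le; intros k _; rewrite <- (sum_list_map (cyl_weight p0) (@tl nat)).
  set (P_k := filter (fun e => Nat.eqb (hd O e) k) P).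
  assert (Hcons : forall e, In e P_k -> e = k :: tl e).
  { intros e He; apply (in_filter_hd k P e He); apply filter_In in He as [He _].
    destruct (HP e He) as [k' [l [-> _]]]; discriminate. }
  apply first_crossings_weight_le; auto.
  - apply (NoDup_map_tl k); [apply NoDup_filter|]; auto.
  - intros l Hl; apply in_map_iff in Hl as [e [<- He]].
    pose proof (Hcons e He) as Ee; apply filter_In in He as [He _].
    destruct (HP e He) as [k' [l' [E [_ Hc]]]]; rewrite E in Ee |- *; injection Ee as <-; exact Hc.
Qed.

Fixpoint encode_list (l : list nat) : nat :=
  match l with [] => O | a :: t => S (Cantor.to_nat (a, encode_list t)) end.

Fixpoint decode_list (len n : nat) : list nat :=
  match len, n with
  | S len', S n' => let (a, b) := Cantor.of_nat n' in a :: decode_list len' b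
  | _, _ => []
  end.

Definition list_code (l : list nat) : nat := Cantor.to_nat (length l, encode_list l).

Definition list_decode (m : nat) : list nat := let (len, n) := Cantor.of_nat m in decode_list len n.

Lemma list_codeK l : list_decode (list_code l) = l.
Proof.
  unfold list_decode, list_code; rewrite Cantor.cancel_of_to.
  induction l as [|a l IH]; [reflexivity|].
  transitivity (let (a', b) := Cantor.of_nat (Cantor.to_nat (a, encode_list l)) in
                a' :: decode_list (length l) b); [reflexivity|].
  rewrite Cantor.cancel_of_to, IH; reflexivity.
Qed.

Definition sample_prefix (x : nat -> nat) (n : nat) : list nat := map x (seq 0 n).

Lemma sample_prefix_length x n : length (sample_prefix x n) = n.
Proof. unfold sample_prefix; rewrite length_map, length_seq; reflexivity. Qed.

Lemma sample_prefix_S x n : sample_prefix x (S n) = sample_prefix x n ++ [x n].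
Proof. unfold sample_prefix; rewrite seq_S, map_app; reflexivity. Qed.

Lemma firstn_sample_prefix x n m : (m <= n)%nat -> firstn m (sample_prefix x n) = sample_prefix x m.
Proof.
  intros H; replace n with (m + (n - m))%nat by lia; unfold sample_prefix.
  rewrite seq_app, map_app, <- (sample_prefix_length x m) at 1.
  apply firstn_length_app.
Qed.

Lemma has_prefix_sample_prefix x n : has_prefix x (sample_prefix x n).
Proof.
  intros i Hi; rewrite sample_prefix_length in Hi; unfold sample_prefix.
  rewrite nth_indep with (d' := x O) by (rewrite length_map, length_seq; auto).
  rewrite map_nth, seq_nth by auto; reflexivity.
Qed.

Lemma classic_least_nat (P : nat -> Prop) :
  (exists n, P n) -> exists n, P n /\ forall m, (m < n)%nat -> ~ P m.
Proof.
  intros HP; destruct (dec_inh_nat_subset_has_unique_least_element P (fun n => classic (P n)) HP)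
    as [n [[Hn Hmin] _]].
  exists n; split; auto; intros m Hm Pm; specialize (Hmin m Pm); lia.
Qed.

Lemma small_cylinder p0 : (forall k, 0 <= p0 k) -> p0 O < 1 ->
  forall c, 0 < c -> exists L, cyl_weight p0 (repeat O L) <= c.
Proof.
  intros Hp Hq c Hc.
  assert (Hrep : forall L, cyl_weight p0 (repeat O L) = p0 O ^ L)
    by (induction L; simpl; auto; rewrite IHL; ring).
  destruct (pow_lt_1_zero (p0 O) ltac:(rewrite Rabs_pos_eq; auto; lra) c Hc) as [L HL].
  exists L; rewrite Hrep; specialize (HL L (le_n _)); rewrite Rabs_pos_eq in HL by (apply pow_le; auto); lra.
Qed.

Lemma sum_f_R0_if (b : nat -> bool) (f : nat -> R) M :
  sum_f_R0 (fun m => if b m then f m else 0) M = sum_list f (filter b (seq 0 (S M))).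
Proof.
  rewrite <- sum_list_seq, (sum_list_filter _ b).
  rewrite (sum_list_ext_in _ f (filter b _)), (sum_list_ext_in _ (fun m => 0 * f m) (filter (fun x => negb (b x)) _)).
  - rewrite sum_list_scal; ring.
  - intros m Hm; apply filter_In in Hm as [_ Hm]; destruct (b m); simpl in Hm; [discriminate | ring].
  - intros m Hm; apply filter_In in Hm as [_ Hm]; rewrite Hm; reflexivity.
Qed.

Lemma exists_first_crossing K x n :
  1 <= K (sample_prefix x n) -> exists n0, first_crossing K (sample_prefix x n0).
Proof.
  intros Hn; destruct (classic_least_nat (fun n => 1 <= K (sample_prefix x n)) (ex_intro _ n Hn))
    as [n0 [Hn0 Hmin]].
  exists n0; split; auto; intros i Hi; rewrite sample_prefix_length in Hi.
  rewrite firstn_sample_prefix by lia; apply Rnot_le_lt, Hmin, Hi.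
Qed.

Lemma crossing_codes_weight_le p0 (Kf : nat -> list nat -> R) d ms :
  (forall k, 0 <= p0 k) -> (forall k, supermartingale p0 (Kf k)) ->
  (forall B, sum_f_R0 (fun k => Kf k []) B <= d) -> NoDup ms ->
  (forall m, In m ms -> exists k l, m = list_code (k :: l) /\ first_crossing (Kf k) l) ->
  sum_list (fun m => cyl_weight p0 (tl (list_decode m))) ms <= d.
Proof.
  intros Hp HKs HKb Hms Hcodes.
  rewrite <- (sum_list_map (fun e => cyl_weight p0 (tl e))); set (P := map list_decode ms).
  assert (HnP : NoDup P).
  { apply NoDup_map_NoDup_ForallPairs; auto; intros m1 m2 Hm1 Hm2 E12.
    destruct (Hcodes m1 Hm1) as [k1 [l1 [-> _]]], (Hcodes m2 Hm2) as [k2 [l2 [-> _]]].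
    rewrite !list_codeK in E12; rewrite E12; reflexivity. }
  destruct (list_max_le (map (hd O) P) (list_max (map (hd O) P))) as [Hmax _].
  specialize (Hmax (le_n _)); rewrite Forall_forall in Hmax.
  eapply Rle_trans; [| apply (HKb (list_max (map (hd O) P)))].
  apply first_crossings_family_weight_le; auto.
  intros e He; apply in_map_iff in He as [m [<- Hm]].
  destruct (Hcodes m Hm) as [k [l [-> Hc]]]; rewrite list_codeK; exists k, l.
  split; [reflexivity | split; [| exact Hc]].
  apply (Hmax k), in_map_iff; exists (k :: l); split; auto; apply in_map_iff; exists (list_code (k :: l)).
  rewrite list_codeK; auto.
Qed.

(* The cover lists the codes [k :: l] of first crossings [l] of [Kf k]; every other code gets
   a cylinder of geometrically small weight, since [cover] has to be total. *)
Lemma null_set_of_supermartingales p0 (E : (nat -> nat) -> Prop) :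
  (forall k, 0 <= p0 k) -> p0 O < 1 ->
  (forall d, 0 < d -> exists Kf : nat -> list nat -> R,
      (forall k, supermartingale p0 (Kf k)) /\ (forall B, sum_f_R0 (fun k => Kf k []) B <= d) /\
      (forall x, E x -> exists k n, 1 <= Kf k (sample_prefix x n))) ->
  null_set p0 E.
Proof.
  intros Hp Hq HK eps Heps.
  destruct (HK (eps/2) ltac:(lra)) as [Kf [HKs [HKb HKE]]].
  destruct (choice (fun m L => cyl_weight p0 (repeat O L) <= eps/2 * (/2)^(S m))) as [pad Hpad].
  { intros m; apply small_cylinder; auto; apply Rmult_lt_0_compat; [lra | apply pow_lt; lra]. }
  set (code := fun m => exists k l, m = list_code (k :: l) /\ first_crossing (Kf k) l).
  set (codeb := fun m => if excluded_middle_informative (code m) then true else false).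
  set (cover := fun m => if codeb m then tl (list_decode m) else repeat O (pad m)).
  exists cover; split.
  - intros x Ex; destruct (HKE x Ex) as [k [n Hn]].
    destruct (exists_first_crossing _ _ _ Hn) as [n0 Hc].
    exists (list_code (k :: sample_prefix x n0)); unfold cover, codeb.
    destruct excluded_middle_informative as [_|Hg].
    + rewrite list_codeK; apply has_prefix_sample_prefix.
    + exfalso; apply Hg; exists k, (sample_prefix x n0); auto.
  - intros M; apply Rle_trans with
      (sum_f_R0 (fun m => if codeb m then cyl_weight p0 (tl (list_decode m)) else 0) M
       + sum_f_R0 (fun m => eps/2 * (/2)^(S m)) M).
    + rewrite <- plus_sum; apply sum_Rle; intros m _; unfold cover; specialize (Hpad m).
      assert (0 <= eps/2 * (/2)^(S m)) by (apply Rmult_le_pos; [lra | apply pow_le; lra]).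
      destruct (codeb m); lra.
    + rewrite sum_f_R0_if.
      pose proof (sum_f_R0_geometric_le (eps/2) M ltac:(lra)).
      enough (sum_list (fun m => cyl_weight p0 (tl (list_decode m))) (filter codeb (seq 0 (S M)))
                <= eps / 2) by lra.
      apply (crossing_codes_weight_le p0 Kf); auto; [apply NoDup_filter, seq_NoDup|].
      intros m Hm; apply filter_In in Hm as [_ Hm]; unfold codeb in Hm.
      destruct excluded_middle_informative; [auto | discriminate].
Qed.

Lemma supermartingale_plus p0 K1 K2 :
  supermartingale p0 K1 -> supermartingale p0 K2 -> supermartingale p0 (fun l => K1 l + K2 l).
Proof.
  intros [A1 B1] [A2 B2]; split; [intros l; specialize (A1 l); specialize (A2 l); lra|].
  intros l F Hn; specialize (B1 l F Hn); specialize (B2 l F Hn).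
  rewrite (sum_list_ext_in _ (fun a => p0 a * K1 (l ++ [a]) + p0 a * K2 (l ++ [a])))
    by (intros; ring).
  rewrite sum_list_plus; lra.
Qed.

Lemma supermartingale_scal p0 c K :
  0 <= c -> supermartingale p0 K -> supermartingale p0 (fun l => c * K l).
Proof.
  intros Hc [A B]; split; [intros l; specialize (A l); nra|].
  intros l F Hn; specialize (B l F Hn).
  rewrite (sum_list_ext_in _ (fun a => c * (p0 a * K (l ++ [a])))) by (intros; ring).
  rewrite sum_list_scal; nra.
Qed.

Lemma supermartingale_sum p0 (F : nat -> list nat -> R) k :
  (forall j, supermartingale p0 (F j)) -> supermartingale p0 (fun l => sum_f_R0 (fun j => F j l) k).
Proof. intros H; induction k; [exact (H O) | exact (supermartingale_plus p0 _ _ IHk (H (S k)))]. Qed.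

Lemma sum_list_le_sum_f_R0 (f : nat -> R) N F : (forall a, 0 <= f a) -> NoDup F ->
  (forall a, In a F -> (a <= N)%nat) -> sum_list f F <= sum_f_R0 f N.
Proof.
  intros Hf Hn HF.
  rewrite (sum_list_group (fun a => a) f (seq 0 (S N)) F (seq_NoDup _ _)), <- sum_list_seq
    by (intros a Ha; apply in_seq; specialize (HF a Ha); lia).
  apply sum_list_le; intros a _; apply sum_list_le_single; auto; [apply NoDup_filter; auto|].
  intros b Hb; apply filter_In in Hb as [_ Hb]; apply Nat.eqb_eq; auto.
Qed.

Lemma pmf_nonneg p0 : is_pmf p0 -> forall k, 0 <= p0 k.
Proof. intros [H _]; auto. Qed.

Lemma pmf_partial_sum_le1 p0 n : is_pmf p0 -> sum_f_R0 p0 n <= 1.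
Proof. intros [H1 H2]; apply sum_incr; auto. Qed.

Lemma pmf_le1 p0 j : is_pmf p0 -> p0 j <= 1.
Proof. intros [H1 H2]; apply (term_le_infinite_sum p0 1 j H1 H2). Qed.

Lemma pmf_sum_list_le1 p0 F : is_pmf p0 -> NoDup F -> sum_list p0 F <= 1.
Proof.
  intros H Hn.
  destruct (list_max_le F (list_max F)) as [Hmax _]; specialize (Hmax (le_n _)).
  rewrite Forall_forall in Hmax.
  eapply Rle_trans; [apply (sum_list_le_sum_f_R0 p0 (list_max F) F) | apply pmf_partial_sum_le1];
    auto; apply pmf_nonneg; auto.
Qed.

Definition indicator (j a : nat) : R := if Nat.eqb a j then 1 else 0.

Definition tilt_factor (p0 : nat -> R) (j : nat) (lam : R) (a : nat) : R :=
  1 + lam * (indicator j a - p0 j).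

Definition count_martingale (p0 : nat -> R) (j : nat) (lam : R) (l : list nat) : R :=
  fold_left (fun acc a => acc * tilt_factor p0 j lam a) l 1.

Lemma indicator_cases j a : indicator j a = 0 \/ indicator j a = 1.
Proof. unfold indicator; destruct (Nat.eqb a j); auto. Qed.

Lemma count_martingale_snoc p0 j lam l a :
  count_martingale p0 j lam (l ++ [a]) = count_martingale p0 j lam l * tilt_factor p0 j lam a.
Proof. unfold count_martingale; rewrite fold_left_app; reflexivity. Qed.

Lemma tilt_factor_ge_half p0 j lam a :
  is_pmf p0 -> -1/2 <= lam <= 1/2 -> 1/2 <= tilt_factor p0 j lam a.
Proof.
  intros H Hl; unfold tilt_factor; pose proof (pmf_le1 p0 j H); pose proof (pmf_nonneg p0 H j).
  destruct (indicator_cases j a) as [E|E]; rewrite E; nra.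
Qed.

Lemma count_martingale_pos p0 j lam l :
  is_pmf p0 -> -1/2 <= lam <= 1/2 -> 0 < count_martingale p0 j lam l.
Proof.
  intros H Hl; induction l as [|a l IH] using rev_ind; [unfold count_martingale; simpl; lra|].
  rewrite count_martingale_snoc; pose proof (tilt_factor_ge_half p0 j lam a H Hl).
  apply Rmult_lt_0_compat; lra.
Qed.

Lemma sum_list_indicator p0 j F : NoDup F ->
  sum_list (fun a => p0 a * indicator j a) F = if in_dec Nat.eq_dec j F then p0 j else 0.
Proof.
  induction F as [|a F IH]; simpl; intros Hn; auto; inversion Hn as [|? ? Ha Hn']; subst.
  rewrite IH by auto; unfold indicator.
  destruct (Nat.eqb_spec a j), (in_dec Nat.eq_dec j F), (Nat.eq_dec a j); subst; try tauto; ring.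
Qed.

Lemma count_martingale_supermartingale p0 j lam :
  is_pmf p0 -> -1/2 <= lam <= 1/2 -> supermartingale p0 (count_martingale p0 j lam).
Proof.
  intros H Hl; pose proof (pmf_le1 p0 j H); pose proof (pmf_nonneg p0 H j).
  split; [intros l; left; apply count_martingale_pos; auto|].
  intros l F Hn.
  assert (Hk : 0 < count_martingale p0 j lam l) by (apply count_martingale_pos; auto).
  rewrite (sum_list_ext_in _ (fun a => count_martingale p0 j lam l *
      ((1 - lam * p0 j) * p0 a + lam * (p0 a * indicator j a))))
    by (intros a _; rewrite count_martingale_snoc; unfold tilt_factor; ring).
  rewrite sum_list_scal, sum_list_plus, !sum_list_scal, sum_list_indicator by auto.
  enough ((1 - lam * p0 j) * sum_list p0 F + lam * (if in_dec Nat.eq_dec j F then p0 j else 0) <= 1)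
    by nra.
  pose proof (pmf_sum_list_le1 p0 F H Hn).
  assert (0 <= sum_list p0 F) by (apply sum_list_nonneg; intros; apply pmf_nonneg; auto).
  assert (0 <= 1 - lam * p0 j) by nra.
  destruct (in_dec Nat.eq_dec j F) as [Hi|Hi]; [nra|].
  assert (sum_list p0 (j :: F) <= 1) by (apply pmf_sum_list_le1; auto; constructor; auto).
  simpl in *; nra.
Qed.

Lemma exp_le_exp a b : a <= b -> exp a <= exp b.
Proof. intros [H|H]; [left; apply exp_increasing; auto | subst; lra]. Qed.

(* Via [t - 2 t^2 <= t / (1 + t)] and [exp (u) <= 1 / (1 - u)]. *)
Lemma exp_sub_twice_sq_le t : -1/2 <= t -> exp (t - 2 * t^2) <= 1 + t.
Proof.
  intros Ht; set (u := t / (1 + t)).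
  assert (Hu1 : 1 - u = / (1 + t)) by (unfold u; field; lra).
  assert (Hu2 : t - 2 * t^2 <= u).
  { unfold u; apply Rle_trans with (t - t^2 / (1 + t)); [| right; field; lra].
    enough (t^2 / (1 + t) <= 2 * t^2) by lra.
    apply Rmult_le_reg_r with (1 + t); [lra|].
    unfold Rdiv; rewrite Rmult_assoc, Rinv_l by lra; nra. }
  apply Rle_trans with (exp u); [apply exp_le_exp; auto|].
  pose proof (exp_ineq1_le (- u)) as Hexp; rewrite exp_Ropp in Hexp.
  assert (0 < / (1 + t)) by (apply Rinv_0_lt_compat; lra).
  pose proof (exp_pos u).
  replace (1 + t) with (/ / (1 + t)) by (field; lra).
  rewrite <- (Rinv_inv (exp u)); apply Rinv_le_contravar; auto; lra.
Qed.

Lemma INR_count_eq_S x j n : INR (count_eq x j (S n)) = indicator j (x n) + INR (count_eq x j n).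
Proof. simpl; rewrite plus_INR; unfold indicator; destruct (Nat.eqb (x n) j); simpl; ring. Qed.

Lemma count_martingale_ge_exp p0 j lam x n : is_pmf p0 -> -1/2 <= lam <= 1/2 ->
  exp (lam * (INR (count_eq x j n) - INR n * p0 j) - 2 * lam^2 * INR n)
    <= count_martingale p0 j lam (sample_prefix x n).
Proof.
  intros H Hl; pose proof (pmf_le1 p0 j H); pose proof (pmf_nonneg p0 H j).
  induction n as [|n IH].
  - unfold count_martingale; simpl.
    match goal with |- exp ?e <= _ => replace e with 0 by ring end; rewrite exp_0; lra.
  - rewrite sample_prefix_S, count_martingale_snoc, INR_count_eq_S, S_INR.
    set (t := lam * (indicator j (x n) - p0 j)).
    replace (lam * (indicator j (x n) + INR (count_eq x j n) - (INR n + 1) * p0 j) - 2 * lam ^ 2 * (INR n + 1))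
      with ((lam * (INR (count_eq x j n) - INR n * p0 j) - 2 * lam^2 * INR n) + (t - 2 * lam^2))
      by (unfold t; ring).
    rewrite exp_plus.
    assert (Ht : t^2 <= lam^2 /\ -1/2 <= t).
    { unfold t; assert (0 <= lam^2) by nra.
      destruct (indicator_cases j (x n)) as [E|E]; rewrite E; split; [| nra | | nra].
      - replace ((lam * (0 - p0 j))^2) with (lam^2 * p0 j ^ 2) by ring.
        assert (p0 j ^ 2 <= 1) by nra; nra.
      - replace ((lam * (1 - p0 j))^2) with (lam^2 * (1 - p0 j)^2) by ring.
        assert ((1 - p0 j) ^ 2 <= 1) by nra; nra. }
    assert (exp (t - 2 * lam^2) <= tilt_factor p0 j lam (x n)).
    { apply Rle_trans with (exp (t - 2 * t^2)); [apply exp_le_exp; lra|].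
      apply exp_sub_twice_sq_le; tauto. }
    apply Rmult_le_compat; auto; left; apply exp_pos.
Qed.

Definition two_sided_martingale (p0 : nat -> R) (j : nat) (lam : R) (l : list nat) : R :=
  count_martingale p0 j lam l + count_martingale p0 j (- lam) l.

Lemma two_sided_martingale_pos p0 j lam l :
  is_pmf p0 -> 0 <= lam <= 1/2 -> 0 < two_sided_martingale p0 j lam l.
Proof.
  intros H Hl; unfold two_sided_martingale.
  pose proof (count_martingale_pos p0 j lam l H ltac:(lra)).
  pose proof (count_martingale_pos p0 j (- lam) l H ltac:(lra)); lra.
Qed.

Lemma two_sided_martingale_supermartingale p0 j lam :
  is_pmf p0 -> 0 <= lam <= 1/2 -> supermartingale p0 (two_sided_martingale p0 j lam).
Proof. intros H Hl; apply supermartingale_plus; apply count_martingale_supermartingale; auto; lra. Qed.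

(* With [lam = eps/4], a frequency deviation of [eps] at time [n] makes one of the two
   tilted martingales grow linearly in [n]. *)
Lemma two_sided_martingale_deviation p0 j x n eps : is_pmf p0 -> (1 <= n)%nat -> 0 < eps <= 1 ->
  eps <= Rabs (empirical x n j - p0 j) ->
  1 + INR n * eps^2 / 8 <= two_sided_martingale p0 j (eps/4) (sample_prefix x n).
Proof.
  unfold empirical, two_sided_martingale; intros H Hn He Hd; set (c := INR (count_eq x j n)) in *; set (m := INR n) in *.
  assert (Hm : 1 <= m) by (unfold m; apply (le_INR 1); auto).
  assert (Hc : eps * m <= c - m * p0 j \/ c - m * p0 j <= - (eps * m)).
  { replace (c / m - p0 j) with ((c - m * p0 j) / m) in Hd by (field; lra).
    unfold Rdiv in Hd; rewrite Rabs_mult, Rabs_inv, (Rabs_pos_eq m) in Hd by lra.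
    assert (eps * m <= Rabs (c - m * p0 j)).
    { apply Rmult_le_reg_r with (/ m); [apply Rinv_0_lt_compat; lra|].
      rewrite Rmult_assoc, Rinv_r, Rmult_1_r by lra; auto. }
    destruct (Rcase_abs (c - m * p0 j));
      [rewrite Rabs_left in H0 by auto | rewrite Rabs_right in H0 by auto]; lra. }
  pose proof (count_martingale_pos p0 j (eps/4) (sample_prefix x n) H ltac:(lra)).
  pose proof (count_martingale_pos p0 j (-(eps/4)) (sample_prefix x n) H ltac:(lra)).
  pose proof (exp_ineq1_le (m * eps^2 / 8)).
  destruct Hc as [Hc|Hc].
  - pose proof (count_martingale_ge_exp p0 j (eps/4) x n H ltac:(lra)); fold c m in H3.
    assert (exp (m * eps^2 / 8) <= exp (eps / 4 * (c - m * p0 j) - 2 * (eps / 4) ^ 2 * m))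
      by (apply exp_le_exp; nra).
    lra.
  - pose proof (count_martingale_ge_exp p0 j (-(eps/4)) x n H ltac:(lra)); fold c m in H3.
    assert (exp (m * eps^2 / 8) <= exp (-(eps / 4) * (c - m * p0 j) - 2 * (-(eps / 4)) ^ 2 * m))
      by (apply exp_le_exp; nra).
    lra.
Qed.

Definition frequency_deviates (p0 : nat -> R) (k : nat) (x : nat -> nat) : Prop :=
  exists j, (j <= k)%nat /\ forall N, exists n, (N <= n)%nat /\ (1 <= n)%nat /\
    / INR (S k) <= Rabs (empirical x n j - p0 j).

Definition frequencies_diverge (p0 : nat -> R) (x : nat -> nat) : Prop :=
  exists k, frequency_deviates p0 k x.

Lemma inv_INR_S_bounds k : 0 < / INR (S k) <= 1.
Proof.
  pose proof (pos_INR k); rewrite S_INR; split; [apply Rinv_0_lt_compat; lra|].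
  rewrite <- Rinv_1; apply Rinv_le_contravar; lra.
Qed.

Lemma frequency_deviates_crossing p0 k x c : is_pmf p0 -> 0 < c -> frequency_deviates p0 k x ->
  exists n, 1 <= c * sum_f_R0 (fun j => two_sided_martingale p0 j (/ INR (S k) / 4) (sample_prefix x n)) k.
Proof.
  intros H Hc [j [Hj Hinf]]; set (e := / INR (S k)); pose proof (inv_INR_S_bounds k) as He; fold e in He.
  assert (Hce : 0 < c * e^2 / 8) by (apply Rmult_lt_0_compat; [apply Rmult_lt_0_compat|]; nra).
  destruct (INR_archimed (c * e^2 / 8) 1 Hce) as [N HN].
  destruct (Hinf N) as [n [HNn [Hn1 Hdev]]]; exists n.
  pose proof (two_sided_martingale_deviation p0 j x n e H Hn1 He Hdev).
  assert (INR N <= INR n) by (apply le_INR; auto).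
  assert (two_sided_martingale p0 j (e / 4) (sample_prefix x n) <=
          sum_f_R0 (fun j => two_sided_martingale p0 j (e / 4) (sample_prefix x n)) k).
  { apply (term_le_sum_f_R0 (fun j => two_sided_martingale p0 j (e / 4) (sample_prefix x n))); auto.
    intros i; left; apply two_sided_martingale_pos; auto; lra. }
  assert (INR N * (c * e^2 / 8) <= INR n * (c * e^2 / 8)) by (apply Rmult_le_compat_r; lra).
  nra.
Qed.

(* Strong law of large numbers for the frequencies, by the supermartingale criterion:
   deviations of size [1/(k+1)] are caught by [sum_(j <= k)] of the two-sided martingales,
   scaled so that their initial values [d/2^(k+1)] sum to at most [d]. *)
Lemma frequencies_diverge_null p0 : is_pmf p0 -> p0 O < 1 -> null_set p0 (frequencies_diverge p0).
Proof.
  intros H Hq; apply null_set_of_supermartingales; [apply pmf_nonneg; auto | auto |].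
  intros d Hd.
  set (c := fun k : nat => d * (/2)^(S k) / (2 * INR (S k))).
  assert (Hc : forall k, 0 < c k).
  { intros k; unfold c; pose proof (pos_INR k); rewrite S_INR.
    apply Rdiv_lt_0_compat; [apply Rmult_lt_0_compat; [auto | apply pow_lt; lra] | lra]. }
  exists (fun k l => c k * sum_f_R0 (fun j => two_sided_martingale p0 j (/ INR (S k) / 4) l) k).
  split; [| split].
  - intros k; apply supermartingale_scal; [left; auto|]; apply supermartingale_sum; intros j.
    apply two_sided_martingale_supermartingale; auto; pose proof (inv_INR_S_bounds k); lra.
  - intros B; eapply Rle_trans; [| apply (sum_f_R0_geometric_le d B); lra].
    right; apply sum_eq; intros k _.
    rewrite (sum_eq _ (fun _ => 2)) by (intros; unfold two_sided_martingale, count_martingale; simpl; ring).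
    rewrite sum_f_R0_const; unfold c; pose proof (pos_INR k); rewrite (S_INR k); field; lra.
  - intros x [k Hk]; exists k; apply frequency_deviates_crossing; auto.
Qed.

Lemma sum_f_R0_indicator a M : sum_f_R0 (fun j => indicator j a) M = if Nat.leb a M then 1 else 0.
Proof.
  induction M as [|M IH]; unfold indicator in *.
  - simpl; destruct (Nat.eqb_spec a 0), (Nat.leb_spec a 0); auto; lia.
  - rewrite tech5, IH.
    destruct (Nat.leb_spec a M), (Nat.eqb_spec a (S M)), (Nat.leb_spec a (S M)); try lia; ring.
Qed.

Lemma empirical_nonneg x n j : 0 <= empirical x n j.
Proof.
  unfold empirical, Rdiv; destruct n; [simpl; rewrite Rinv_0; lra|].
  apply Rmult_le_pos; [apply pos_INR | left; apply Rinv_0_lt_compat, lt_0_INR; lia].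
Qed.

Lemma empirical_partial_sum_le1 x n M : (1 <= n)%nat -> sum_f_R0 (empirical x n) M <= 1.
Proof.
  intros Hn; assert (Hn0 : 0 < INR n) by (apply lt_0_INR; lia).
  assert (Hcount : sum_f_R0 (fun j => INR (count_eq x j n)) M <= INR n).
  { clear Hn Hn0; induction n as [|n IH]; [simpl; rewrite sum_f_R0_const; lra|].
    rewrite (sum_eq _ (fun j => indicator j (x n) + INR (count_eq x j n)))
      by (intros; apply INR_count_eq_S).
    rewrite plus_sum, sum_f_R0_indicator, S_INR; destruct (Nat.leb (x n) M); lra. }
  rewrite (sum_eq _ (fun j => INR (count_eq x j n) * / INR n)) by (intros; reflexivity).
  rewrite <- scal_sum; apply Rmult_le_reg_l with (INR n); auto.
  rewrite <- Rmult_assoc, Rinv_r by lra; lra.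
Qed.

Lemma empirical_le1 x n j : (1 <= n)%nat -> empirical x n j <= 1.
Proof.
  intros Hn; eapply Rle_trans; [apply (term_le_sum_f_R0 (empirical x n) j j) | apply empirical_partial_sum_le1];
    auto; intros; apply empirical_nonneg.
Qed.

Lemma empirical_finite_support x n : exists M, forall j, (M < j)%nat -> empirical x n j = 0.
Proof.
  assert (exists M, forall j, (M < j)%nat -> count_eq x j n = O) as [M HM].
  { induction n as [|n [M HM]]; [exists O; reflexivity|].
    exists (max M (x n)); intros j Hj; simpl; rewrite HM by lia.
    destruct (Nat.eqb_spec (x n) j); lia. }
  exists M; intros j Hj; unfold empirical; rewrite HM by auto; simpl; unfold Rdiv; ring.
Qed.

Lemma eventually_forall_le (P : nat -> nat -> Prop) J :
  (forall j, (j <= J)%nat -> exists N, forall n, (N <= n)%nat -> P j n) ->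
  exists N, forall n, (N <= n)%nat -> forall j, (j <= J)%nat -> P j n.
Proof.
  induction J as [|J IH]; intros H.
  - destruct (H O (le_n _)) as [N HN]; exists N; intros n Hn j Hj; replace j with O by lia; auto.
  - destruct IH as [N1 H1]; [intros j Hj; apply H; lia|].
    destruct (H (S J) (le_n _)) as [N2 H2]; exists (max N1 N2); intros n Hn j Hj.
    destruct (Nat.eq_dec j (S J)); [subst; apply H2 | apply H1]; lia.
Qed.

Lemma empirical_converges_pointwise p0 x : ~ frequencies_diverge p0 x ->
  forall J g, 0 < g -> exists N, forall n, (N <= n)%nat -> (1 <= n)%nat ->
    forall j, (j <= J)%nat -> Rabs (empirical x n j - p0 j) < g.
Proof.
  intros HE J g Hg.
  destruct (INR_archimed g 1 Hg) as [K0 HK0]; set (k := max J K0).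
  assert (Hk : / INR (S k) < g).
  { assert (INR K0 <= INR k) by (apply le_INR; lia); rewrite S_INR.
    pose proof (pos_INR k); apply Rmult_lt_reg_l with (INR k + 1); [lra|].
    rewrite Rinv_r by lra; nra. }
  destruct (eventually_forall_le
              (fun j n => (1 <= n)%nat -> Rabs (empirical x n j - p0 j) < / INR (S k)) J) as [N HN].
  { intros j Hj; apply NNPP; intros Hno; apply HE; exists k, j; split; [lia|].
    intros N; apply NNPP; intros Hno2; apply Hno; exists N; intros n Hn H1.
    apply Rnot_le_lt; intros Hle; apply Hno2; exists n; auto. }
  exists N; intros n Hn H1 j Hj; specialize (HN n Hn j Hj H1); lra.
Qed.

Lemma sum_f_R0_truncate (f : nat -> R) J M :
  (J <= M)%nat -> sum_f_R0 (fun j => if Nat.leb j J then f j else 0) M = sum_f_R0 f J.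
Proof.
  intros H; induction H.
  - apply sum_eq; intros i Hi; destruct (Nat.leb_spec i J); auto; lia.
  - rewrite tech5, IHle; destruct (Nat.leb_spec (S m) J); [lia | ring].
Qed.

(* Two subprobabilities that are [g]-close on [0..J], where [q] already has mass [1 - eta/4]:
   the head contributes [(J+1) g^2] and the tails at most their total mass [|p - q| <= p + q]. *)
Lemma square_sum_le_of_close_heads (p q : nat -> R) J g eta M :
  (forall j, 0 <= p j <= 1) -> (forall j, 0 <= q j <= 1) ->
  (forall N, sum_f_R0 p N <= 1) -> (forall N, sum_f_R0 q N <= 1) ->
  1 - eta / 4 <= sum_f_R0 q J -> 0 <= g <= 1 -> INR (S J) * g <= eta / 4 ->
  (forall j, (j <= J)%nat -> Rabs (p j - q j) < g) ->
  sum_f_R0 (fun j => (p j - q j)^2) M <= eta.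
Proof.
  intros Hp Hq Hsp Hsq HJ Hg HSJ Hclose; set (M' := max M J).
  apply Rle_trans with (sum_f_R0 (fun j => (p j - q j)^2) M');
    [apply sum_f_R0_le_index; [intros; apply pow2_ge_0 | lia]|].
  apply Rle_trans with (sum_f_R0 (fun j => (if Nat.leb j J then g^2 else 0)
                          + (p j + q j - (if Nat.leb j J then p j + q j else 0))) M').
  { apply sum_Rle; intros j _; rewrite <- (pow2_abs (p j - q j)).
    pose proof (Rabs_pos (p j - q j)); specialize (Hp j); specialize (Hq j).
    destruct (Nat.leb_spec j J) as [Hj|Hj].
    - specialize (Hclose j Hj); nra.
    - assert (Rabs (p j - q j) <= 1) by (apply Rabs_le; lra).
      assert (Rabs (p j - q j) <= p j + q j) by (apply Rabs_le; lra); nra. }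
  rewrite plus_sum, minus_sum, plus_sum.
  rewrite (sum_f_R0_truncate (fun _ => g^2)), (sum_f_R0_truncate (fun j => p j + q j)) by lia.
  rewrite plus_sum, sum_f_R0_const.
  pose proof (Hsp M'); pose proof (Hsq M').
  assert (sum_f_R0 q J - INR (S J) * g <= sum_f_R0 p J).
  { rewrite <- sum_f_R0_const, <- minus_sum; apply sum_Rle; intros j Hj.
    specialize (Hclose j Hj); apply Rabs_def2 in Hclose; lra. }
  assert (INR (S J) * g^2 <= INR (S J) * g) by (apply Rmult_le_compat_l; [apply pos_INR | nra]).
  lra.
Qed.

Lemma empirical_l2_small p0 x : is_pmf p0 -> ~ frequencies_diverge p0 x ->
  forall eta, 0 < eta -> exists N, forall n, (N <= n)%nat -> (1 <= n)%nat ->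
    forall M, sum_f_R0 (fun j => (empirical x n j - p0 j)^2) M <= eta.
Proof.
  intros H HE eta He.
  destruct (proj2 H (eta/4) ltac:(lra)) as [J HJ]; specialize (HJ J (le_n _)).
  unfold Rdist in HJ; pose proof (pmf_partial_sum_le1 p0 J H); rewrite Rabs_left1 in HJ by lra.
  assert (HS : 0 < INR (S J)) by (apply lt_0_INR; lia).
  set (g := Rmin 1 (eta / (4 * INR (S J)))).
  assert (Hg : 0 < g) by (apply Rmin_glb_lt; [lra | apply Rdiv_lt_0_compat; lra]).
  assert (Hg2 : INR (S J) * g <= eta / 4).
  { apply Rle_trans with (INR (S J) * (eta / (4 * INR (S J))));
      [apply Rmult_le_compat_l; [lra | apply Rmin_r] | right; field; lra]. }
  destruct (empirical_converges_pointwise p0 x HE J g Hg) as [N HN].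
  exists N; intros n Hn H1 M.
  apply (square_sum_le_of_close_heads _ _ J g); auto.
  - intros j; split; [apply empirical_nonneg | apply empirical_le1; auto].
  - intros j; split; [apply pmf_nonneg | apply pmf_le1]; auto.
  - intros; apply empirical_partial_sum_le1; auto.
  - intros; apply pmf_partial_sum_le1; auto.
  - lra.
  - split; [lra | apply Rmin_l].
Qed.

Lemma pow_lt_compat_l x y k : 0 <= x < y -> (1 <= k)%nat -> x ^ k < y ^ k.
Proof.
  intros Hxy Hk; destruct k as [|k]; [lia|]; clear Hk; induction k as [|k IH]; [simpl; lra|].
  change (x * x ^ (S k) < y * y ^ (S k)); pose proof (pow_le x (S k) ltac:(lra)); nra.
Qed.

Lemma sq_sub_le a b : (a - b)^2 <= 2 * a^2 + 2 * b^2.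
Proof. pose proof (pow2_ge_0 (a + b)); nra. Qed.

Lemma square_summable_sub (a b : nat -> R) :
  square_summable a -> square_summable b -> square_summable (fun j => a j - b j).
Proof.
  intros [la Ha] [lb Hb].
  apply (infinite_sum_dominated _ (fun j => 2 * a j ^ 2 + 2 * b j ^ 2));
    [intros n; split; [apply pow2_ge_0 | apply sq_sub_le] | eexists; apply infinite_sum_lin; eauto].
Qed.

Lemma pmf_square_summable p0 : is_pmf p0 -> square_summable p0.
Proof.
  intros H; apply (infinite_sum_dominated _ p0); [| exists 1; apply H].
  intros n; pose proof (pmf_nonneg p0 H n); pose proof (pmf_le1 p0 n H); split; [apply pow2_ge_0 | nra].
Qed.

Lemma sq_sub_le_via a b c : (b - c)^2 <= 2 * (a - b)^2 + 2 * (a - c)^2.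
Proof. pose proof (pow2_ge_0 (2 * a - b - c)); nra. Qed.

(* Since [p0] is a competitor in [C], [||pn - q|| <= ||pn - p0||], hence [||q - p0|| <= 2 ||pn - p0||]. *)
Lemma LSE_square_dist_le pn p0 q D :
  square_summable pn -> in_C p0 -> is_LSE pn q ->
  infinite_sum (fun j => (pn j - p0 j)^2) D ->
  exists S, infinite_sum (fun j => (q j - p0 j)^2) S /\ S <= 4 * D.
Proof.
  intros Hpn Hp0 [[_ Hq] Hmin] HD.
  destruct (square_summable_sub pn q Hpn Hq) as [A HA].
  assert (HAD : / 2 * A <= / 2 * D)
    by (apply (Hmin p0 Hp0); apply infinite_sum_scal; auto).
  assert (Hle : forall n, (q n - p0 n)^2 <= 2 * (pn n - q n)^2 + 2 * (pn n - p0 n)^2)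
    by (intros; apply sq_sub_le_via).
  destruct (infinite_sum_dominated (fun j => (q j - p0 j)^2)
              (fun j => 2 * (pn j - q j)^2 + 2 * (pn j - p0 j)^2)) as [S HS].
  { intros n; split; [apply pow2_ge_0 | apply Hle]. }
  { eexists; apply infinite_sum_lin; eauto. }
  exists S; split; auto.
  enough (S <= 2 * A + 2 * D) by lra.
  apply (infinite_sum_le _ _ _ _ Hle HS (infinite_sum_lin _ _ _ _ 2 2 HA HD)).
Qed.

Lemma abs_le_of_square_sum d S T : infinite_sum (fun j => d j ^ 2) S -> S <= T ^ 2 -> 0 <= T ->
  forall j, Rabs (d j) <= T.
Proof.
  intros HS HST HT j.
  pose proof (term_le_infinite_sum _ _ j (fun k => pow2_ge_0 (d k)) HS); cbv beta in *.
  rewrite <- (pow2_abs (d j)) in *; pose proof (Rabs_pos (d j)); nra.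
Qed.

Lemma pow_root_exists s k : 0 <= s -> (1 <= k)%nat -> exists v, 0 <= v /\ v ^ k = s.
Proof.
  intros [Hs|<-] Hk; [| exists 0; split; [lra | apply pow_i; lia]].
  exists (Rpower s (/ INR k)); split; [left; apply exp_pos|].
  rewrite <- Rpower_pow by apply exp_pos.
  rewrite Rpower_mult, Rinv_l by (apply not_0_INR; lia); apply Rpower_1; auto.
Qed.

(* For [r >= 2], [sum |d|^r <= sup |d|^(r-2) sum d^2]. *)
Lemma lr_norm_lt_of_square_sum r d S T eps :
  (r = None \/ exists k : nat, r = Some k /\ (2 <= k)%nat) ->
  infinite_sum (fun j => d j ^ 2) S -> S <= T ^ 2 -> 0 <= T < eps ->
  exists v, lr_norm r d v /\ v < eps.
Proof.
  intros Hr HS HST HT; pose proof (abs_le_of_square_sum d S T HS HST (proj1 HT)) as Hd.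
  destruct Hr as [->|[k [-> Hk]]]; simpl.
  - destruct (completeness (fun y => exists j, y = Rabs (d j))) as [v Hv].
    { exists T; intros y [j ->]; auto. }
    { exists (Rabs (d O)), O; reflexivity. }
    exists v; split; auto; enough (v <= T) by lra.
    apply (proj2 Hv); intros y [j ->]; auto.
  - assert (Hdom : forall j, 0 <= Rabs (d j) ^ k <= T ^ (k - 2) * d j ^ 2).
    { intros j; split; [apply pow_le, Rabs_pos|].
      replace k with ((k - 2) + 2)%nat at 1 by lia; rewrite pow_add, pow2_abs.
      apply Rmult_le_compat_r; [apply pow2_ge_0 | apply pow_incr; split; [apply Rabs_pos | auto]]. }
    destruct (infinite_sum_dominated _ _ Hdom) as [s Hs]; [eexists; apply infinite_sum_scal; eauto|].
    assert (HsT : s <= T ^ k).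
    { apply Rle_trans with (T ^ (k - 2) * S);
        [apply (infinite_sum_le _ _ _ _ (fun j => proj2 (Hdom j)) Hs (infinite_sum_scal _ _ _ HS))|].
      replace (T ^ k) with (T ^ (k - 2) * T ^ 2) by (rewrite <- pow_add; f_equal; lia).
      apply Rmult_le_compat_l; auto; apply pow_le; lra. }
    pose proof (pow_lt_compat_l T eps k ltac:(lra) ltac:(lia)).
    destruct (pow_root_exists s k (infinite_sum_nonneg _ _ (fun j => proj1 (Hdom j)) Hs) ltac:(lia))
      as [v [Hv0 Hvk]].
    exists v; split; [split; [auto | rewrite Hvk; auto]|].
    apply Rnot_le_lt; intros Hle; pose proof (pow_incr eps v k ltac:(lra)); lra.
Qed.

Lemma support_ok_head_lt1 p0 : is_pmf p0 -> support_ok p0 -> p0 O < 1.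
Proof.
  intros H Hs; assert (0 < p0 1%nat) by (destruct Hs as [Hs|[S [HS Hs]]]; [| apply Hs]; auto).
  pose proof (pmf_partial_sum_le1 p0 1 H); simpl in *; lra.
Qed.

Lemma empirical_square_summable x n : square_summable (empirical x n).
Proof.
  destruct (empirical_finite_support x n) as [M HM]; eexists.
  apply (infinite_sum_finite_support _ M); intros k Hk; rewrite HM by auto; ring.
Qed.

Theorem proposition2 :
  forall (r : option nat),
    (r = None \/ exists k : nat, r = Some k /\ (2 <= k)%nat) ->
  forall (p0 : nat -> R),
    is_pmf p0 -> convex_seq p0 -> support_ok p0 ->
  exists E : (nat -> nat) -> Prop,
    null_set p0 E /\
    forall x : nat -> nat, ~ E x ->
    forall phat : nat -> nat -> R,
      (forall n, (1 <= n)%nat -> is_LSE (empirical x n) (phat n)) ->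
      forall eps : R, 0 < eps ->
        exists N : nat, forall n, (N <= n)%nat ->
          exists v : R, lr_norm r (fun j => phat n j - p0 j) v /\ v < eps.
Proof.
  intros r Hr p0 Hpmf Hcv Hsupp; exists (frequencies_diverge p0); split.
  { apply frequencies_diverge_null, support_ok_head_lt1; auto. }
  intros x HE phat Hlse eps Heps.
  destruct (empirical_l2_small p0 x Hpmf HE (eps^2/8) ltac:(nra)) as [N HN].
  exists (max N 1); intros n Hn.
  assert (Hp0 : in_C p0) by (split; [| apply pmf_square_summable]; auto).
  destruct (square_summable_sub _ _ (empirical_square_summable x n) (proj2 Hp0)) as [D HD].
  assert (HDle : D <= eps^2/8) by (apply (infinite_sum_le_bound _ _ _ (HN n ltac:(lia) ltac:(lia)) HD)).
  destruct (LSE_square_dist_le _ _ (phat n) D (empirical_square_summable x n) Hp0 (Hlse n ltac:(lia)) HD)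
    as [S [HS HSD]].
  apply (lr_norm_lt_of_square_sum r _ S (3 * eps / 4) eps Hr HS); [nra | lra].
Qed.
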